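(* Let $P:\mathcal C^{op}\to\mathbf{Heyt}$ be a weak hyperdoctrine with comprehensive diagonals and let $A$ be an object of $\mathcal C$. Then $P$ satisfies the Axiom of Choice on $A$ if and only if its elementary quotient completion $\overline P$ satisfies the Axiom of Choice on $(A,\delta_A)$.
   Context: An elementary doctrine on $\mathcal C$ with finite products is $P:\mathcal C^{op}\to\mathbf{InfSL}$ with equality predicates $\delta_A\in P(A\times A)$ (written $a=_Aa'$) such that $\alpha\mapsto P_{\langle pr_1,pr_2\rangle}(\alpha)\wedge P_{\langle pr_2,pr_3\rangle}(\delta_A)$ is left adjoint to $P_{\langle pr_1,pr_2,pr_2\rangle}$. A weak hyperdoctrine is an elementary doctrine such that $\mathcal C$ is weakly cartesian closed (for all $A,B$ there is $W$ and $ev:W\times A\to B$ such that every $C\times A\to B$ is $ev\circ(g\times\mathrm{id}_A)$ for some, not necessarily unique, $g$), the fibres are Heyting algebras with Heyting reindexing, and reindexing along projections has left and right adjoints $\exists,\forall$ satisfying Beck–Chevalley. Comprehensive diagonals: $f,g:X\to Y$ are equal whenever $x:X\mid\top\vdash f(x)=_Yg(x)$. The Axiom of Choice holds on $A$ if for every object $B$ and $R\in P(A\times B)$: $\forall a:A.\exists b:B.R(a,b)\vdash\exists f:W.\forall a:A.R(a,ev(f,a))$ with $ev:W\times A\to B$ a weak evaluation. The elementary quotient completion $\overline P:\mathcal Q_P^{op}\to\mathbf{InfSL}$ has objects $(A,\rho)$ with $\rho$ a $P$-equivalence relation, arrows equivalence classes of $\rho$-$\sigma$-preserving arrows (with $f\sim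 g$ iff $\rho(a,a')\vdash\sigma(f(a),g(a'))$), and $\overline P(A,\rho)=\{\alpha\in P(A)\mid\alpha(a)\wedge\rho(a,a')\vdash\alpha(a')\}$. *)

Record CatData := {
  Ob : Type;
  Hom : Ob -> Ob -> Type;
  idm : forall A, Hom A A;
  comp : forall A B C, Hom B C -> Hom A B -> Hom A C;   (* comp g f = g o f *)
  term : Ob;
  bang : forall A, Hom A term;
  prod : Ob -> Ob -> Ob;
  p1 : forall A B, Hom (prod A B) A;
  p2 : forall A B, Hom (prod A B) B;
  pair : forall X A B, Hom X A -> Hom X B -> Hom X (prod A B)
}.
Arguments Hom {c} _ _.
Arguments idm {c} _.
Arguments comp {c A B C} _ _.
Arguments term {c}.
Arguments bang {c} _.
Arguments prod {c} _ _.
Arguments p1 {c A B}.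
Arguments p2 {c A B}.
Arguments pair {c X A B} _ _.

Record CatLaws (C : CatData) : Prop := {
  comp_assoc : forall (A B X Y : Ob C) (f : Hom A B) (g : Hom B X) (h : Hom X Y),
      comp h (comp g f) = comp (comp h g) f;
  comp_id_l : forall (A B : Ob C) (f : Hom A B), comp (idm B) f = f;
  comp_id_r : forall (A B : Ob C) (f : Hom A B), comp f (idm A) = f;
  bang_uniq : forall (A : Ob C) (f g : Hom A term), f = g;
  p1_pair : forall (X A B : Ob C) (f : Hom X A) (g : Hom X B), comp p1 (pair f g) = f;
  p2_pair : forall (X A B : Ob C) (f : Hom X A) (g : Hom X B), comp p2 (pair f g) = g;
  pair_eta : forall (X A B : Ob C) (h : Hom X (prod A B)), pair (comp p1 h) (comp p2 h) = h
}.

Definition is_weak_ev {C : CatData} (A B W : Ob C) (ev : Hom (prod W A) B) : Prop :=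
  forall (X : Ob C) (h : Hom (prod X A) B),
    exists g : Hom X W, h = comp ev (pair (comp g p1) p2).

Record DocData (C : CatData) := {
  Pt : Ob C -> Type;
  le : forall A, Pt A -> Pt A -> Prop;
  top : forall A, Pt A;
  meet : forall A, Pt A -> Pt A -> Pt A;
  bot : forall A, Pt A;
  join : forall A, Pt A -> Pt A -> Pt A;
  impl : forall A, Pt A -> Pt A -> Pt A;
  re : forall A B, Hom A B -> Pt B -> Pt A;
  delta : forall A, Pt (prod A A);
  ex : forall X Y, Pt (prod X Y) -> Pt X;
  fa : forall X Y, Pt (prod X Y) -> Pt X
}.
Arguments Pt {C} _ _.
Arguments le {C d A} _ _.
Arguments top {C d}_.
Arguments meet {C d A} _ _.
Arguments bot {C d}_.
Arguments join {C d A} _ _.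
Arguments impl {C d A} _ _.
Arguments re {C d A B} _ _.
Arguments delta {C d}_.
Arguments ex {C d X Y} _.
Arguments fa {C d X Y} _.

Record WeakHyperdoctrine {C : CatData} (P : DocData C) : Prop := {
  le_refl : forall A (x : Pt P A), le x x;
  le_trans : forall A (x y z : Pt P A), le x y -> le y z -> le x z;
  le_antisym : forall A (x y : Pt P A), le x y -> le y x -> x = y;
  top_max : forall A (x : Pt P A), le x (top A);
  meet_glb : forall A (x y z : Pt P A), le z (meet x y) <-> (le z x /\ le z y);
  bot_min : forall A (x : Pt P A), le (bot A) x;
  join_lub : forall A (x y z : Pt P A), le (join x y) z <-> (le x z /\ le y z);
  impl_adj : forall A (x y z : Pt P A), le (meet z x) y <-> le z (impl x y);
  re_mono : forall A B (f : Hom A B) (x y : Pt P B), le x y -> le (re f x) (re f y);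
  re_id : forall A (x : Pt P A), re (idm A) x = x;
  re_comp : forall A B X (f : Hom A B) (g : Hom B X) (x : Pt P X),
      re (comp g f) x = re f (re g x);
  re_top : forall A B (f : Hom A B), re f (top (d:=P) B) = top A;
  re_meet : forall A B (f : Hom A B) (x y : Pt P B), re f (meet x y) = meet (re f x) (re f y);
  re_bot : forall A B (f : Hom A B), re f (bot (d:=P) B) = bot A;
  re_join : forall A B (f : Hom A B) (x y : Pt P B), re f (join x y) = join (re f x) (re f y);
  re_impl : forall A B (f : Hom A B) (x y : Pt P B), re f (impl x y) = impl (re f x) (re f y);
  (* elementary: P_<pr1,pr2>(-) /\ P_<pr2,pr3>(delta_A)  -|  P_<pr1,pr2,pr2>,
     on P(X x A) -> P((X x A) x A) *)
  delta_adj : forall (X A : Ob C) (a : Pt P (prod X A)) (b : Pt P (prod (prod X A) A)),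
      le (meet (re p1 a) (re (pair (comp p2 p1) p2) (delta A))) b
      <-> le a (re (pair (idm (prod X A)) p2) b);
  weak_cc : forall A B : Ob C, exists (W : Ob C) (ev : Hom (prod W A) B), is_weak_ev A B W ev;
  ex_adj : forall (X Y : Ob C) (a : Pt P (prod X Y)) (b : Pt P X),
      le (ex a) b <-> le a (re p1 b);
  fa_adj : forall (X Y : Ob C) (a : Pt P (prod X Y)) (b : Pt P X),
      le b (fa a) <-> le (re p1 b) a;
  ex_BC : forall (X' X Y : Ob C) (f : Hom X' X) (a : Pt P (prod X Y)),
      re f (ex a) = ex (re (pair (comp f p1) p2) a);
  fa_BC : forall (X' X Y : Ob C) (f : Hom X' X) (a : Pt P (prod X Y)),
      re f (fa a) = fa (re (pair (comp f p1) p2) a)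
}.

Definition comprehensive_diagonals {C : CatData} (P : DocData C) : Prop :=
  forall (X Y : Ob C) (f g : Hom X Y), le (top (d:=P) X) (re (pair f g) (delta (d:=P) Y)) -> f = g.

(* Axiom of Choice on A for P:
   forall a:A. exists b:B. R(a,b)  |-  exists f:W. forall a:A. R(a, ev(f,a))
   in the fibre over the terminal object (contexts 1 x A, 1 x W). *)
Definition AC {C : CatData} (P : DocData C) (A : Ob C) : Prop :=
  forall (B : Ob C) (R : Pt P (prod A B)) (W : Ob C) (ev : Hom (prod W A) B),
    is_weak_ev A B W ev ->
    le (fa (re (p2 (A := term) (B := A)) (ex R)))
       (ex (re (p2 (A := term) (B := W)) (fa (re (pair p2 ev) R)))).

Definition eqrel {C : CatData} {P : DocData C} {A : Ob C} (r : Pt P (prod A A)) : Prop :=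
  le (top (d:=P) A) (re (pair (idm A) (idm A)) r) /\
  le r (re (pair p2 p1) r) /\
  le (meet (re (pair (comp p1 p1) (comp p2 p1)) r) (re (pair (comp p2 p1) p2) r))
     (re (pair (comp p1 p1) p2) r).

(* alpha in \overline P(A, rho):  alpha(a) /\ rho(a,a') |- alpha(a') *)
Definition descent {C : CatData} {P : DocData C} {A : Ob C} (r : Pt P (prod A A))
  (a : Pt P A) : Prop :=
  le (meet (re p1 a) r) (re p2 a).

(* product object in Q_P: (A,rho) x (B,sigma) = (A x B, rho [x] sigma) *)
Definition prodrel {C : CatData} {P : DocData C} {A B : Ob C}
  (r : Pt P (prod A A)) (s : Pt P (prod B B)) : Pt P (prod (prod A B) (prod A B)) :=
  meet (re (pair (comp p1 p1) (comp p1 p2)) r) (re (pair (comp p2 p1) (comp p2 p2)) s).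

Definition preserves {C : CatData} {P : DocData C} {A B : Ob C}
  (r : Pt P (prod A A)) (s : Pt P (prod B B)) (f : Hom A B) : Prop :=
  le r (re (pair (comp f p1) (comp f p2)) s).

Definition arr_equiv {C : CatData} {P : DocData C} {A B : Ob C}
  (r : Pt P (prod A A)) (s : Pt P (prod B B)) (f g : Hom A B) : Prop :=
  le r (re (pair (comp f p1) (comp g p2)) s).

Definition is_weak_ev_bar {C : CatData} {P : DocData C} {A B W : Ob C}
  (r : Pt P (prod A A)) (s : Pt P (prod B B)) (w : Pt P (prod W W))
  (ev : Hom (prod W A) B) : Prop :=
  eqrel w /\ preserves (prodrel w r) s ev /\
  forall (X : Ob C) (g : Pt P (prod X X)) (h : Hom (prod X A) B),
    eqrel g -> preserves (prodrel g r) s h ->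
    exists k : Hom X W, preserves g w k /\
      arr_equiv (prodrel g r) s h (comp ev (pair (comp k p1) p2)).

(* b is the value at a of the left adjoint to \overline P_{pr1} along
   pr1 : (X,rX) x (Y,rY) -> (X,rX)  (a is assumed in \overline P(X x Y, rX [x] rY)) *)
Definition is_ex_bar {C : CatData} {P : DocData C} {X Y : Ob C}
  (rX : Pt P (prod X X)) (a : Pt P (prod X Y)) (b : Pt P X) : Prop :=
  descent rX b /\ forall c : Pt P X, descent rX c -> (le b c <-> le a (re p1 c)).

Definition is_fa_bar {C : CatData} {P : DocData C} {X Y : Ob C}
  (rX : Pt P (prod X X)) (a : Pt P (prod X Y)) (b : Pt P X) : Prop :=
  descent rX b /\ forall c : Pt P X, descent rX c -> (le c b <-> le (re p1 c) a).

(* Axiom of Choice for \overline P on the object (A, delta_A) of Q_P;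
   the terminal object of Q_P is (1, delta_1). *)
Definition AC_bar {C : CatData} (P : DocData C) (A : Ob C) : Prop :=
  forall (B : Ob C) (s : Pt P (prod B B)), eqrel s ->
  forall R : Pt P (prod A B), descent (prodrel (delta A) s) R ->
  forall (W : Ob C) (w : Pt P (prod W W)) (ev : Hom (prod W A) B),
    is_weak_ev_bar (delta A) s w ev ->
  forall (e1 : Pt P A) (u1 : Pt P term) (e2 : Pt P W) (u2 : Pt P term),
    is_ex_bar (delta A) R e1 ->                              (* exists b. R(a,b) *)
    is_fa_bar (delta term) (re (p2 (A := term) (B := A)) e1) u1 ->  (* forall a. ... *)
    is_fa_bar w (re (pair p2 ev) R) e2 ->                     (* forall a. R(a,ev(f,a)) *)
    is_ex_bar (delta term) (re (p2 (A := term) (B := W)) e2) u2 ->  (* exists f. ... *)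
    le u1 u2.

From Corelib Require Import ssreflect.

(* Every predicate descends along an equality predicate, so over an object (X, delta_X)
   the fibre of \overline P is that of P and its quantifiers are those of P; over
   (W, omega) the universal quantifier of P still descends.  Hence both sides of the
   Axiom of Choice are computed by the same formulas, and only the weak exponentials
   differ.  A weak evaluation ev : W x A -> B of C becomes one in Q_P on
   (W, forall a. ev(f,a) = ev(f',a)), which gives AC for P from AC for \overline P.
   Conversely, a weak exponential (W, omega) of Q_P receives an arrow k from any weak
   exponential W' of C, and a choice function f' in W' yields the choice function k f'
   in W, because ev'(f',a) and ev(k f',a) are sigma-related. *)

Section WeakHyperdoctrineReasoning.
Variable C : CatData.
Hypothesis HC : CatLaws C.
Variable P : DocData C.
Hypothesis HP : WeakHyperdoctrine P.

Notation dl := (delta (d := P)).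

Lemma comp_pair (Y X A B : Ob C) (f : Hom X A) (g : Hom X B) (h : Hom Y X) :
  comp (pair f g) h = pair (comp f h) (comp g h).
Proof.
rewrite -(pair_eta C HC _ _ _ (comp (pair f g) h)) !(comp_assoc C HC).
by rewrite (p1_pair C HC) (p2_pair C HC).
Qed.

Lemma pair_p1_p2 (A B : Ob C) : pair (@p1 C A B) p2 = idm (prod A B).
Proof. by rewrite -(pair_eta C HC _ _ _ (idm _)) !(comp_id_r C HC). Qed.

Hint Rewrite <- (comp_assoc C HC) (re_comp _ HP) : doctrine.
Hint Rewrite (comp_id_l C HC) (comp_id_r C HC) (p1_pair C HC) (p2_pair C HC)
  (pair_eta C HC) pair_p1_p2 comp_pair (re_meet _ HP) (re_top _ HP) (re_id _ HP)
  : doctrine.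

Tactic Notation "simpl_doctrine" := autorewrite with doctrine.
Tactic Notation "simpl_doctrine" "in" hyp(H) := autorewrite with doctrine in H.

Lemma lexx {A} (x : Pt P A) : le x x.
Proof. exact: le_refl. Qed.

Lemma le_trans' {A} {x y z : Pt P A} : le x y -> le y z -> le x z.
Proof. exact: le_trans. Qed.

Lemma leIl {A} (x y : Pt P A) : le (meet x y) x.
Proof. by have [] := proj1 (meet_glb _ HP _ x y (meet x y)) (lexx _). Qed.

Lemma leIr {A} (x y : Pt P A) : le (meet x y) y.
Proof. by have [] := proj1 (meet_glb _ HP _ x y (meet x y)) (lexx _). Qed.

Lemma lexI {A} {x y z : Pt P A} : le z x -> le z y -> le z (meet x y).
Proof. by move=> zx zy; apply/(meet_glb _ HP). Qed.

Lemma lexT {A} (x : Pt P A) : le x (top A).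
Proof. exact: top_max. Qed.

Lemma le_re {A B} (f : Hom A B) {x y : Pt P B} : le x y -> le (re f x) (re f y).
Proof. exact: re_mono. Qed.

Lemma delta_subst {G Z Y : Ob C} (phi : Pt P (prod Z Y)) (x : Hom G Z) (t t' : Hom G Y) :
  le (meet (re (pair x t) phi) (re (pair t t') (dl Y))) (re (pair x t') phi).
Proof.
have subst_generic : le (meet (re p1 phi) (re (pair (comp p2 p1) p2) (dl Y)))
                        (re (pair (comp p1 p1) p2) phi).
  by apply/(delta_adj _ HP); simpl_doctrine; exact: lexx.
have := le_re (pair (pair x t) t') subst_generic.
by simpl_doctrine.
Qed.

Lemma delta_refl {G Y : Ob C} (t : Hom G Y) : le (top G) (re (pair t t) (dl Y)).
Proof.
have refl_generic : le (top (prod G Y)) (re (pair (idm _) p2) (re (pair (comp p2 p1) p2) (dl Y))).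
  by apply/(delta_adj _ HP); exact: leIr.
have := le_re (pair (idm G) t) refl_generic.
by simpl_doctrine.
Qed.

Lemma delta_sym {G Y : Ob C} (t t' : Hom G Y) :
  le (re (pair t t') (dl Y)) (re (pair t' t) (dl Y)).
Proof.
have := delta_subst (re (pair p2 p1) (dl Y)) t t t'; simpl_doctrine.
apply: le_trans'; apply: lexI (lexx _).
exact: le_trans' (lexT _) (delta_refl _).
Qed.

Lemma delta_trans {G Y : Ob C} (t t' t'' : Hom G Y) :
  le (meet (re (pair t t') (dl Y)) (re (pair t' t'') (dl Y))) (re (pair t t'') (dl Y)).
Proof. exact: delta_subst. Qed.

Lemma delta_congr {G Z Y Y' : Ob C} (h : Hom (prod Z Y) Y') (x : Hom G Z) (t t' : Hom G Y) :
  le (re (pair t t') (dl Y)) (re (pair (comp h (pair x t)) (comp h (pair x t'))) (dl Y')).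
Proof.
pose phi := re (pair (comp h (pair (comp x p1) (comp t p1))) (comp h (pair (comp x p1) p2))) (dl Y').
have := delta_subst phi (idm G) t t'; rewrite /phi; simpl_doctrine.
apply: le_trans'; apply: lexI (lexx _).
exact: le_trans' (lexT _) (delta_refl _).
Qed.

Lemma eqrel_delta (Y : Ob C) : eqrel (dl Y).
Proof.
split; last split.
- exact: delta_refl.
- by have := delta_sym (@p1 C Y Y) p2; simpl_doctrine.
- exact: delta_trans.
Qed.

Lemma descent_delta {A : Ob C} (c : Pt P A) : descent (dl A) c.
Proof. by have := delta_subst (re p2 c) (idm _) (@p1 C A A) p2; simpl_doctrine. Qed.

Lemma descent_term (c : Pt P (@term C)) : descent (dl term) c.
Proof.
rewrite /descent (bang_uniq C HC _ (@p2 C term term) p1).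
exact: leIl.
Qed.

Lemma fa_elim {G X Y : Ob C} (K : Pt P (prod X Y)) (h : Hom G X) (a : Hom G Y) :
  le (re h (fa K)) (re (pair h a) K).
Proof.
have elim_generic : le (re p1 (fa K)) K by apply/(fa_adj _ HP); exact: lexx.
by have := le_re (pair h a) elim_generic; simpl_doctrine.
Qed.

Lemma fa_intro {G X Y : Ob C} (c : Pt P G) (h : Hom G X) (K : Pt P (prod X Y)) :
  le (re p1 c) (re (pair (comp h p1) p2) K) -> le c (re h (fa K)).
Proof. by move=> cK; rewrite (fa_BC _ HP); apply/(fa_adj _ HP). Qed.

Lemma ex_intro {G X Y : Ob C} (K : Pt P (prod X Y)) (h : Hom G X) (a : Hom G Y) :
  le (re (pair h a) K) (re h (ex K)).
Proof.
have intro_generic : le K (re p1 (ex K)) by apply/(ex_adj _ HP); exact: lexx.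
by have := le_re (pair h a) intro_generic; simpl_doctrine.
Qed.

Lemma ex_p2_mono {Z X' X : Ob C} (k : Hom X' X) (a : Pt P X') (b : Pt P X) :
  le a (re k b) -> le (ex (re (@p2 C Z X') a)) (ex (re (@p2 C Z X) b)).
Proof.
move=> ab; apply/(ex_adj _ HP).
have := ex_intro (re p2 b) (@p1 C Z X') (comp k p2); simpl_doctrine.
by apply: le_trans'; rewrite (re_comp _ HP); apply: le_re.
Qed.

Lemma descent_prodrel_at {A B : Ob C} {r : Pt P (prod A A)} {s : Pt P (prod B B)}
    {R : Pt P (prod A B)} :
  descent (prodrel r s) R -> forall {G : Ob C} (a a' : Hom G A) (b b' : Hom G B),
  le (meet (re (pair a b) R) (meet (re (pair a a') r) (re (pair b b') s))) (re (pair a' b') R).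
Proof.
move=> HR G a a' b b'.
by have := le_re (pair (pair a b) (pair a' b')) HR; rewrite /prodrel; simpl_doctrine.
Qed.

Lemma preserves_at {A B : Ob C} {r : Pt P (prod A A)} {s : Pt P (prod B B)} {f : Hom A B} :
  preserves r s f -> forall {G : Ob C} (x x' : Hom G A),
  le (re (pair x x') r) (re (pair (comp f x) (comp f x')) s).
Proof. by move=> Hf G x x'; have := le_re (pair x x') Hf; simpl_doctrine. Qed.

Lemma preserves_delta {Y B : Ob C} (s : Pt P (prod B B)) (h : Hom Y B) :
  le (top B) (re (pair (idm B) (idm B)) s) -> preserves (dl Y) s h.
Proof.
move=> s_refl.
pose phi := re (pair (comp h (comp (@p1 C Y Y) (@p1 C (prod Y Y) Y))) (comp h p2)) s.
have := delta_subst phi (idm (prod Y Y)) p1 p2; rewrite /phi; simpl_doctrine.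
apply: le_trans'; apply: lexI (lexx _).
by have := le_re (comp h (@p1 C Y Y)) s_refl; simpl_doctrine; apply: le_trans' (lexT _).
Qed.

Lemma prodrel_delta_le (X Y : Ob C) : le (prodrel (dl X) (dl Y)) (dl (prod X Y)).
Proof.
pose xs := comp (@p1 C X Y) (@p1 C (prod X Y) (prod X Y)).
pose ys := comp (@p2 C X Y) (@p1 C (prod X Y) (prod X Y)).
have subst_X := delta_subst
  (re (pair (comp p1 p1) (pair p2 (comp p2 (comp p1 p1)))) (dl (prod X Y)))
  (idm _) xs (comp p1 p2).
have subst_Y := delta_subst
  (re (pair (comp p1 p1) (pair (comp p1 (comp p2 p1)) p2)) (dl (prod X Y)))
  (idm _) ys (comp p2 p2).
rewrite /xs /ys in subst_X subst_Y; simpl_doctrine in subst_X; simpl_doctrine in subst_Y.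
apply: le_trans' subst_Y; apply: lexI (leIr _ _).
apply: le_trans' subst_X; apply: lexI (leIl _ _).
by have := delta_refl (@p1 C (prod X Y) (prod X Y)); simpl_doctrine; apply: le_trans' (lexT _).
Qed.

Lemma descent_prodrel_delta {A B : Ob C} (R : Pt P (prod A B)) :
  descent (prodrel (dl A) (dl B)) R.
Proof.
have := descent_delta R; rewrite /descent; apply: le_trans'.
exact: lexI (leIl _ _) (le_trans' (leIr _ _) (prodrel_delta_le _ _)).
Qed.

Lemma prodrel_delta_refl (X Y : Ob C) :
  le (top (prod X Y)) (re (pair (idm _) (idm _)) (prodrel (dl X) (dl Y))).
Proof. by rewrite /prodrel; simpl_doctrine; apply: lexI; apply: delta_refl. Qed.

Lemma arr_equiv_refl {A B : Ob C} {r : Pt P (prod A A)} {s : Pt P (prod B B)} {f g : Hom A B} :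
  le (top A) (re (pair (idm A) (idm A)) r) -> arr_equiv r s f g ->
  le (top A) (re (pair f g) s).
Proof.
move=> r_refl fg; apply: le_trans' r_refl _.
by have := le_re (pair (idm A) (idm A)) fg; simpl_doctrine.
Qed.

Lemma descent_fa_ev {A B W : Ob C} {s : Pt P (prod B B)} {R : Pt P (prod A B)}
    {w : Pt P (prod W W)} {ev : Hom (prod W A) B} :
  descent (prodrel (dl A) s) R -> preserves (prodrel w (dl A)) s ev ->
  descent w (fa (re (pair p2 ev) R)).
Proof.
move=> HR Hev; apply: fa_intro; simpl_doctrine.
pose f := pair (comp (@p1 C W W) (@p1 C (prod W W) A)) p2.
pose f' := pair (comp (@p2 C W W) (@p1 C (prod W W) A)) p2.
have R_at_f := fa_elim (re (pair p2 ev) R) (comp (@p1 C W W) (@p1 C (prod W W) A)) p2.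
have ev_resp := preserves_at Hev f f'.
have R_desc := descent_prodrel_at HR p2 p2 (comp ev f) (comp ev f').
rewrite /f /f' /prodrel in R_at_f ev_resp R_desc.
simpl_doctrine in R_at_f; simpl_doctrine in ev_resp; simpl_doctrine in R_desc.
apply: le_trans' R_desc; apply: lexI; first exact: le_trans' (leIl _ _) R_at_f.
apply: lexI; first exact: le_trans' (lexT _) (delta_refl _).
apply: le_trans' ev_resp; apply: lexI (leIr _ _) _.
exact: le_trans' (lexT _) (delta_refl _).
Qed.

Definition ev_kernel {W A B : Ob C} (ev : Hom (prod W A) B) : Pt P (prod (prod W W) A) :=
  re (pair (comp ev (pair (comp p1 p1) p2)) (comp ev (pair (comp p2 p1) p2))) (dl B).

Lemma eqrel_ev_kernel {W A B : Ob C} (ev : Hom (prod W A) B) : eqrel (fa (ev_kernel ev)).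
Proof.
split; last split; apply: fa_intro; rewrite /ev_kernel; simpl_doctrine.
- exact: le_trans' (lexT _) (delta_refl _).
- have := fa_elim (ev_kernel ev) (@p1 C (prod W W) A) p2; rewrite /ev_kernel; simpl_doctrine.
  by move/le_trans'; apply; apply: delta_sym.
- pose q := comp (@p1 C (prod W W) W) (@p1 C (prod (prod W W) W) A).
  have ker_l := fa_elim (ev_kernel ev) q p2.
  have ker_r := fa_elim (ev_kernel ev) (pair (comp p2 q) (comp p2 p1)) p2.
  rewrite /q /ev_kernel in ker_l ker_r; simpl_doctrine in ker_l; simpl_doctrine in ker_r.
  apply: le_trans' (delta_trans _ _ _).
  exact: lexI (le_trans' (leIl _ _) ker_l) (le_trans' (leIr _ _) ker_r).
Qed.

Lemma preserves_ev_kernel {W A B : Ob C} (ev : Hom (prod W A) B) :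
  preserves (prodrel (fa (ev_kernel ev)) (dl A)) (dl B) ev.
Proof.
pose l := @p1 C (prod W A) (prod W A); pose r := @p2 C (prod W A) (prod W A).
have ker := fa_elim (ev_kernel ev) (pair (comp p1 l) (comp p1 r)) (comp p2 l).
have congr := delta_congr ev (comp p1 r) (comp p2 l) (comp p2 r).
rewrite /l /r /ev_kernel in ker congr; simpl_doctrine in ker; simpl_doctrine in congr.
rewrite /preserves /prodrel; apply: le_trans' (delta_trans _ _ _).
exact: lexI (le_trans' (leIl _ _) ker) (le_trans' (leIr _ _) congr).
Qed.

Lemma is_weak_ev_bar_kernel {W A B : Ob C} {ev : Hom (prod W A) B} :
  is_weak_ev A B W ev -> is_weak_ev_bar (dl A) (dl B) (fa (ev_kernel ev)) ev.
Proof.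
move=> Hev; split; first exact: eqrel_ev_kernel.
split; first exact: preserves_ev_kernel.
move=> X g h _ Hh; have [k Ek] := Hev X h; subst h.
exists k; split=> //; rewrite /preserves /ev_kernel; apply: fa_intro; simpl_doctrine.
have := preserves_at Hh (pair (comp (@p1 C X X) (@p1 C (prod X X) A)) p2)
                        (pair (comp (@p2 C X X) (@p1 C (prod X X) A)) p2).
rewrite /prodrel; simpl_doctrine; apply: le_trans'.
exact: lexI (lexx _) (le_trans' (lexT _) (delta_refl _)).
Qed.

Lemma fa_ev_transfer {A B W W' : Ob C} {s : Pt P (prod B B)} {R : Pt P (prod A B)}
    {ev : Hom (prod W A) B} {ev' : Hom (prod W' A) B} {k : Hom W' W} :
  descent (prodrel (dl A) s) R ->
  arr_equiv (prodrel (dl W') (dl A)) s ev' (comp ev (pair (comp k p1) p2)) ->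
  le (fa (re (pair p2 ev') R)) (re k (fa (re (pair p2 ev) R))).
Proof.
move=> HR Hk; apply: fa_intro; simpl_doctrine.
have := fa_elim (re (pair p2 ev') R) (@p1 C W' A) p2; simpl_doctrine; move/le_trans'; apply.
have := descent_prodrel_at HR p2 p2 ev' (comp ev (pair (comp k p1) p2)); simpl_doctrine.
apply: le_trans'; apply: lexI (lexx _) (lexI (le_trans' (lexT _) (delta_refl _)) _).
exact: le_trans' (lexT _) (arr_equiv_refl (prodrel_delta_refl _ _) Hk).
Qed.

Lemma is_ex_bar_ex {X Y : Ob C} {rX : Pt P (prod X X)} {a : Pt P (prod X Y)} :
  descent rX (ex a) -> is_ex_bar rX a (ex a).
Proof. by split=> // c _; apply: (ex_adj _ HP). Qed.

Lemma is_ex_bar_eq {X Y : Ob C} {rX : Pt P (prod X X)} {a : Pt P (prod X Y)} {b : Pt P X} :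
  descent rX (ex a) -> is_ex_bar rX a b -> b = ex a.
Proof.
move=> Hex [Hb Hadj]; apply: (le_antisym _ HP).
- by apply/(Hadj _ Hex)/(ex_adj _ HP)/lexx.
- by apply/(ex_adj _ HP)/(Hadj _ Hb)/lexx.
Qed.

Lemma is_fa_bar_fa {X Y : Ob C} {rX : Pt P (prod X X)} {a : Pt P (prod X Y)} :
  descent rX (fa a) -> is_fa_bar rX a (fa a).
Proof. by split=> // c _; apply: (fa_adj _ HP). Qed.

Lemma is_fa_bar_eq {X Y : Ob C} {rX : Pt P (prod X X)} {a : Pt P (prod X Y)} {b : Pt P X} :
  descent rX (fa a) -> is_fa_bar rX a b -> b = fa a.
Proof.
move=> Hfa [Hb Hadj]; apply: (le_antisym _ HP).
- by apply/(fa_adj _ HP)/(Hadj _ Hb)/lexx.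
- by apply/(Hadj _ Hfa)/(fa_adj _ HP)/lexx.
Qed.

Lemma AC_bar_of_AC (A : Ob C) : AC P A -> AC_bar P A.
Proof.
move=> HAC B s Hs R HR W w ev [_ [Hevp Hevu]] e1 u1 e2 u2 He1 Hu1 He2 Hu2.
have [W' [ev' Hev']] := weak_cc _ HP A B.
have Hev'p : preserves (prodrel (dl W') (dl A)) s ev' :=
  le_trans' (prodrel_delta_le _ _) (preserves_delta s ev' (proj1 Hs)).
have [k [_ Hk]] := Hevu W' (dl W') ev' (eqrel_delta W') Hev'p.
have E1 := is_ex_bar_eq (descent_delta _) He1; subst e1.
have E2 := is_fa_bar_eq (descent_fa_ev HR Hevp) He2; subst e2.
rewrite (is_fa_bar_eq (descent_term _) Hu1) (is_ex_bar_eq (descent_term _) Hu2).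
apply: le_trans' (HAC _ R _ _ Hev') _.
exact: ex_p2_mono (fa_ev_transfer HR Hk).
Qed.

Lemma AC_of_AC_bar (A : Ob C) : AC_bar P A -> AC P A.
Proof.
move=> Hbar B R W ev Hev.
have HR := descent_prodrel_delta R.
exact: Hbar _ _ (eqrel_delta B) R HR W _ ev (is_weak_ev_bar_kernel Hev) _ _ _ _
  (is_ex_bar_ex (descent_delta _)) (is_fa_bar_fa (descent_term _))
  (is_fa_bar_fa (descent_fa_ev HR (preserves_ev_kernel ev))) (is_ex_bar_ex (descent_term _)).
Qed.

End WeakHyperdoctrineReasoning.

Theorem proposition3p12 (C : CatData) (HC : CatLaws C) (P : DocData C)
  (HP : WeakHyperdoctrine P) (Hcd : comprehensive_diagonals P) (A : Ob C) :
  AC P A <-> AC_bar P A.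
Proof. by split; [exact: AC_bar_of_AC | exact: AC_of_AC_bar]. Qed.
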